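(* Let $(a_n(q))$ be a $q$-Euler–Gauss sequence and $N\ge1$ an integer. If $a_d(1)\neq0$ for every divisor $d$ of $N$ such that $N/d$ is not a prime power, then $\sum_{d\mid N}\mu(d)\,a_{N/d}(q^d)\equiv0\pmod{[N]_q}$.
   Context: $\mu$ is the Möbius function, $[n]_q=1+q+\dots+q^{n-1}$; polynomial congruences modulo $[n]_q$ mean divisibility of the difference by $[n]_q$ in $\mathbb{Z}[q]$. A sequence $(a_n(q))$ in $\mathbb{Z}[q]$ is a $q$-Euler–Gauss sequence if for all $n\ge1$, $\prod_{d\mid n,\,\mu(d)=1}a_{n/d}(q^d)\equiv\prod_{d\mid n,\,\mu(d)=-1}a_{n/d}(q^d)\pmod{[n]_q}$. ''$N/d$ is not a prime power'' means $N/d$ has at least two distinct prime divisors ($1=p^0$ counts as a prime power). *)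

From mathcomp Require Import all_boot all_order all_algebra.
Set Implicit Arguments. Unset Strict Implicit. Unset Printing Implicit Defensive.
Import GRing.Theory.
Local Open Scope ring_scope.

(* Moebius function on positive naturals (value at 0 irrelevant, set to 0). *)
Definition mobius (n : nat) : int :=
  if (n == 0)%N then 0
  else if [exists p : 'I_n.+1, prime p && (p * p %| n)%N] then 0
  else (-1) ^+ size (primes n).

Definition qint (n : nat) : {poly int} := \sum_(i < n) 'X^i.

Definition zdvdp (p f : {poly int}) : Prop := exists r : {poly int}, f = r * p.

Definition subs_pow (a : {poly int}) (d : nat) : {poly int} := a \Po 'X^d.

Definition qEulerGauss (a : nat -> {poly int}) : Prop :=
  forall n : nat, (0 < n)%N ->
    zdvdp (qint n)
      (\prod_(d <- divisors n | mobius d == 1) subs_pow (a (n %/ d)%N) d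
       - \prod_(d <- divisors n | mobius d == -1) subs_pow (a (n %/ d)%N) d).

(* m is a prime power (1 = p^0 counts) iff it has at most one prime divisor *)
Definition is_prime_power (m : nat) : bool := (0 < m)%N && (size (primes m) <= 1)%N.

(* Since [N]_q is monic and its complex roots are the nontrivial N-th roots
   of unity, it suffices that the Moebius sum vanishes at every primitive
   e-th root of unity z with 1 < e | N.  The key fact is a_n(z) = a_{n/e}(1)
   whenever e | n | N, proved by strong induction on n: evaluating the
   q-Euler-Gauss congruence for n at z, each factor a_{n/d}(z^d) with d > 1
   equals a_{n/lcm(d,e)}(1) by induction, since z^d is a primitive
   e/gcd(d,e)-th root of unity.  Multiplying or dividing d by a prime p | e
   swaps the sign of mu(d) without changing lcm(d,e), so these values pair
   off and leave a_n(z) X = a_{n/e}(1) X.  Here X is a product of values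
   a_m(1) for which N/m has a divisor d with mu(d) = 1, d <> 1, hence two
   distinct prime factors, so X <> 0 by hypothesis.  The same pairing then
   cancels the Moebius sum at z. *)

From mathcomp Require Import all_boot all_algebra algC cyclotomic.
Import GRing.Theory.
Set Implicit Arguments. Unset Strict Implicit.
Local Open Scope ring_scope.

Lemma qint_mul_Xsub1 n : ('X - 1) * qint n = 'X^n - 1.
Proof. by rewrite subrX1 /qint. Qed.

Lemma qint_monic n : (0 < n)%N -> qint n \is monic.
Proof.
by move=> n0; rewrite -(monicMl _ (monicXsubC 1)) qint_mul_Xsub1 monicXnsubC.
Qed.

Lemma size_qint n : size (qint n) = n.
Proof.
case: n => [|n]; first by rewrite /qint big_ord0 size_poly0.
have := congr1 (fun p : {poly int} => size p) (qint_mul_Xsub1 n.+1).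
rewrite -polyC1 size_monicM ?monicXsubC ?monic_neq0 ?qint_monic //.
by rewrite size_XsubC size_XnsubC // => -[].
Qed.

(* A notation rather than a definition, so that rewriting with the ring
   morphism lemmas finds the canonical structure of [horner_morph]. *)
Notation evalC z := (horner_morph (fun c : int => mulrC (z : algC) c%:~R)).

Lemma evalCE z f : evalC z f = (map_poly intr f).[z].
Proof. by []. Qed.

Lemma evalC1 f : evalC 1 f = (f.[1])%:~R.
Proof. by rewrite evalCE -horner_map rmorph1. Qed.

Lemma evalC_subs_pow z f d : evalC z (subs_pow f d) = evalC (z ^+ d) f.
Proof. by rewrite !evalCE map_comp_poly horner_comp rmorphXn /= map_polyX hornerXn. Qed.

Lemma evalC_qint n z : z ^+ n = 1 -> z != 1 -> evalC z (qint n) = 0.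
Proof.
move=> zn z1; have /eqP := congr1 (evalC z) (qint_mul_Xsub1 n).
rewrite rmorphM !rmorphB rmorphXn rmorph1 /= horner_morphX zn subrr.
by rewrite mulf_eq0 subr_eq0 (negPf z1) => /eqP.
Qed.

Lemma poly_eq0_nontrivial_unity_roots n (g : {poly algC}) : (size g < n)%N ->
  (forall z : algC, z ^+ n = 1 -> z != 1 -> g.[z] = 0) -> g = 0.
Proof.
move=> sg gz; have n0 : (0 < n)%N by apply: leq_ltn_trans sg.
have [w pw] := C_prim_root_exists n0.
have wk_neq1 k : (0 < k < n)%N -> w ^+ k != 1.
  by move=> /andP[k0 kn]; rewrite -(prim_order_dvd pw) gtnNdvd.
apply: (@roots_geq_poly_eq0 _ _ [seq w ^+ k | k <- iota 1 n.-1]).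
- apply/allP => _ /mapP[k + ->]; rewrite mem_iota add1n prednK // => kn.
  apply/eqP/gz; last exact: wk_neq1.
  by rewrite exprAC (prim_expr_order pw) expr1n.
- rewrite map_inj_in_uniq ?iota_uniq // => i j.
  rewrite !mem_iota add1n prednK // => /andP[_ ilt] /andP[_ jlt] /eqP.
  by rewrite (eq_prim_root_expr pw) !modn_small // => /eqP.
- by rewrite size_map size_iota -ltnS prednK.
Qed.

Lemma qint_dvd_of_roots n f : (0 < n)%N ->
  (forall z : algC, z ^+ n = 1 -> z != 1 -> evalC z f = 0) -> zdvdp (qint n) f.
Proof.
move=> n0 fz; have qmon := qint_monic n0.
exists (Pdiv.Ring.rdivp f (qint n)).
rewrite {1}(Pdiv.RingMonic.rdivp_eq qmon f); set r := Pdiv.Ring.rmodp _ _.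
suff -> : r = 0 by rewrite addr0.
have sr : (size r < n)%N.
  by rewrite -{1}(size_qint n) Pdiv.Ring.ltn_rmodpN0 ?monic_neq0.
apply: (map_inj_poly (@intr_inj _) (rmorph0 _)).
rewrite map_poly0; apply: (poly_eq0_nontrivial_unity_roots (n := n)).
  by rewrite size_map_inj_poly //; exact: intr_inj.
move=> z zn z1; have := fz z zn z1.
rewrite {1}(Pdiv.RingMonic.rdivp_eq qmon f) rmorphD rmorphM /=.
by rewrite evalC_qint // mulr0 add0r.
Qed.

Lemma exists_sqr_dvdP n : (0 < n)%N ->
  reflect (exists2 p, prime p & (p * p %| n)%N)
          [exists p : 'I_n.+1, prime p && (p * p %| n)%N].
Proof.
move=> n0; apply: (iffP existsP) => [[p /andP[pp pn]]|[p pp pn]]; first by exists p.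
have lt_pn : (p < n.+1)%N.
  by rewrite ltnS (leq_trans _ (dvdn_leq n0 pn)) // leq_pmulr // prime_gt0.
by exists (Ordinal lt_pn); rewrite pp.
Qed.

Lemma mobius_gt0 n : mobius n != 0 -> (0 < n)%N.
Proof. by rewrite /mobius; case: n. Qed.

Lemma mobius_sqr_dvd n p : prime p -> (p * p %| n)%N -> mobius n = 0.
Proof.
move=> pp pn; have [->//|n0] := posnP n.
have sq : [exists q : 'I_n.+1, prime q && (q * q %| n)%N].
  by apply/exists_sqr_dvdP => //; exists p.
by rewrite /mobius (negPf (lt0n_neq0 n0)) sq.
Qed.

Lemma mobius_sqfree n : (0 < n)%N -> (forall p, prime p -> ~~ (p * p %| n)%N) ->
  mobius n = (-1) ^+ size (primes n).
Proof.
move=> n0 sqf; rewrite /mobius (negPf (lt0n_neq0 n0)).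
by case: (exists_sqr_dvdP n0) => // -[p /sqf/negP].
Qed.

Lemma mobius_neq0E n : mobius n != 0 -> mobius n = (-1) ^+ size (primes n).
Proof.
move=> mn; apply: mobius_sqfree (mobius_gt0 mn) _ => p pp.
by apply: contra mn => /(mobius_sqr_dvd pp)->.
Qed.

Lemma mobius1 : mobius 1 = 1.
Proof.
rewrite mobius_sqfree // => p pp; rewrite dvdn1 muln_eq1 andbb.
by apply: contraTN pp => /eqP->.
Qed.

Lemma size_primes_mulp d p : (0 < d)%N -> prime p -> ~~ (p %| d)%N ->
  size (primes (d * p)) = (size (primes d)).+1.
Proof.
move=> d0 pp pd; change (size (primes (d * p)) = size (p :: primes d)).
apply/perm_size/uniq_perm; rewrite ?primes_uniq //=.
  by rewrite mem_primes pp d0 (negPf pd) primes_uniq.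
by move=> q; rewrite primesM ?(prime_gt0 pp) // (primes_prime pp) mem_seq1 in_cons orbC.
Qed.

Lemma mobius_mulp d p : (0 < d)%N -> prime p -> ~~ (p %| d)%N ->
  mobius (d * p) = - mobius d.
Proof.
move=> d0 pp pd; case: (exists_sqr_dvdP d0) => [[r pr rd]|sqf].
  by rewrite !(mobius_sqr_dvd pr) ?oppr0 ?dvdn_mulr.
have {}sqf r : prime r -> ~~ (r * r %| d)%N.
  by move=> pr; apply/negP => rd; apply: sqf; exists r.
have sqf_dp r : prime r -> ~~ (r * r %| d * p)%N.
  move=> pr; have [->|rp] := eqVneq r p.
    by rewrite dvdn_pmul2r ?prime_gt0.
  by rewrite Gauss_dvdl ?sqf // coprimeMl !prime_coprime // dvdn_prime2 // rp.
rewrite (mobius_sqfree d0 sqf) mobius_sqfree ?muln_gt0 ?d0 ?prime_gt0 //.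
by rewrite size_primes_mulp // exprS mulN1r.
Qed.

Lemma lcmn_mul_coprime x p e : coprime x p -> (p %| e)%N ->
  lcmn (x * p) e = lcmn x e.
Proof.
move=> xp pe; have -> : (x * p = lcmn x p)%N by rewrite /lcmn (eqP xp) divn1.
by rewrite -lcmnA (lcmn_idPr pe).
Qed.

Definition toggle_prime (p d : nat) : nat :=
  if (p %| d)%N then (d %/ p)%N else (d * p)%N.

Lemma sqfree_divp d p : mobius d != 0 -> prime p -> (p %| d)%N -> ~~ (p %| d %/ p)%N.
Proof.
move=> md pp pd; apply: contra md => pdp.
by rewrite (mobius_sqr_dvd pp) // -(divnK pd) dvdn_pmul2r ?prime_gt0.
Qed.

Lemma divp_gt0 d p : mobius d != 0 -> prime p -> (p %| d)%N -> (0 < d %/ p)%N.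
Proof.
by move=> md pp pd; rewrite divn_gt0 ?(prime_gt0 pp) // (dvdn_leq (mobius_gt0 md)).
Qed.

Lemma toggle_primeK d p : mobius d != 0 -> prime p ->
  toggle_prime p (toggle_prime p d) = d.
Proof.
move=> md pp; rewrite /toggle_prime; have [pd|pd] := boolP (p %| d)%N.
  by rewrite ifN ?divnK ?sqfree_divp.
by rewrite dvdn_mull // mulnK ?prime_gt0.
Qed.

Lemma mobius_toggle_prime d p : mobius d != 0 -> prime p ->
  mobius (toggle_prime p d) = - mobius d.
Proof.
move=> md pp; rewrite /toggle_prime; have [pd|pd] := boolP (p %| d)%N.
  by rewrite -{2}(divnK pd) mobius_mulp ?opprK ?divp_gt0 ?sqfree_divp.
by rewrite mobius_mulp ?mobius_gt0.
Qed.

Lemma dvdn_toggle_prime n d p : prime p -> (p %| n)%N -> (d %| n)%N ->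
  (toggle_prime p d %| n)%N.
Proof.
move=> pp pn dn; rewrite /toggle_prime; have [pd|pd] := boolP (p %| d)%N.
  exact: dvdn_trans (dvdn_div pd) dn.
by rewrite Gauss_dvd ?dn // coprime_sym prime_coprime.
Qed.

Lemma lcmn_toggle_prime d p e : mobius d != 0 -> prime p -> (p %| e)%N ->
  lcmn (toggle_prime p d) e = lcmn d e.
Proof.
move=> md pp pe; rewrite /toggle_prime; have [pd|pd] := boolP (p %| d)%N.
  by rewrite -{2}(divnK pd) lcmn_mul_coprime // coprime_sym prime_coprime ?sqfree_divp.
by rewrite lcmn_mul_coprime // coprime_sym prime_coprime.
Qed.

Lemma big_mobius_toggle_prime (R : Type) (idx : R) (op : Monoid.com_law idx)
    n p (G : nat -> R) :
  (0 < n)%N -> prime p -> (p %| n)%N ->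
  (forall d, (d %| n)%N -> mobius d != 0 -> G (toggle_prime p d) = G d) ->
  \big[op/idx]_(d <- divisors n | mobius d == 1) G d =
  \big[op/idx]_(d <- divisors n | mobius d == -1) G d.
Proof.
move=> n0 pp pn Gtoggle; rewrite -[LHS]big_filter -[RHS]big_filter.
have mem_s (s : int) d : (d \in [seq d <- divisors n | mobius d == s]) =
    (d %| n)%N && (mobius d == s).
  by rewrite mem_filter -dvdn_divisors // andbC.
have toggle_perm : perm_eq
    [seq toggle_prime p d | d <- [seq d <- divisors n | mobius d == 1]]
    [seq d <- divisors n | mobius d == -1].
  apply: uniq_perm; rewrite ?filter_uniq ?divisors_uniq //.
    rewrite map_inj_in_uniq ?filter_uniq ?divisors_uniq //.
    apply: (can_in_inj (g := toggle_prime p)) => d.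
    by rewrite mem_s => /andP[_ /eqP md]; rewrite toggle_primeK ?md.
  move=> d; apply/mapP/idP => [[e + ->]|].
    rewrite !mem_s => /andP[en /eqP me].
    by rewrite dvdn_toggle_prime // mobius_toggle_prime ?me.
  rewrite mem_s => /andP[dn /eqP md]; exists (toggle_prime p d).
    by rewrite mem_s dvdn_toggle_prime // mobius_toggle_prime ?md ?opprK.
  by rewrite toggle_primeK ?md.
rewrite -(perm_big _ toggle_perm) big_map; apply: eq_big_seq => d.
by rewrite mem_s => /andP[dn /eqP md]; rewrite Gtoggle ?md.
Qed.

Lemma big_mobius_lcmn (R : Type) (idx : R) (op : Monoid.com_law idx)
    n e (F : nat -> R) :
  (0 < n)%N -> (1 < e)%N -> (e %| n)%N ->
  \big[op/idx]_(d <- divisors n | mobius d == 1) F (lcmn d e) =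
  \big[op/idx]_(d <- divisors n | mobius d == -1) F (lcmn d e).
Proof.
move=> n0 e1 en; have pp := pdiv_prime e1; have pe := pdiv_dvd e.
apply: (big_mobius_toggle_prime _ n0 pp (dvdn_trans pe en)) => d _ md.
by rewrite lcmn_toggle_prime.
Qed.

Lemma bigD1_mobius1 (R : Type) (idx : R) (op : Monoid.com_law idx)
    n (F : nat -> R) : (0 < n)%N ->
  \big[op/idx]_(d <- divisors n | mobius d == 1) F d =
  op (F 1%N) (\big[op/idx]_(d <- divisors n | (d != 1%N) && (mobius d == 1)) F d).
Proof.
move=> n0; rewrite big_mkcond (bigD1_seq 1%N) ?divisor1 ?divisors_uniq //=.
by rewrite mobius1 -big_mkcondr.
Qed.

Lemma sumr_mobius (V : zmodType) (s : seq nat) (F : nat -> V) :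
  \sum_(d <- s) F d *~ mobius d =
  \sum_(d <- s | mobius d == 1) F d - \sum_(d <- s | mobius d == -1) F d.
Proof.
rewrite [in RHS]big_mkcond [X in _ - X]big_mkcond -sumrB; apply: eq_bigr => d _.
have [->|md] := eqVneq (mobius d) 0; first by rewrite mulr0z subrr.
by rewrite (mobius_neq0E md) -signr_odd; case: odd; rewrite /= ?sub0r ?subr0.
Qed.

Lemma mobius_eq1_primes d : mobius d = 1 -> d != 1%N -> (1 < size (primes d))%N.
Proof.
move=> md d1; have md0 : mobius d != 0 by rewrite md.
have d_gt1 : (1 < d)%N by rewrite ltn_neqAle eq_sym d1 mobius_gt0.
have : pdiv d \in primes d by rewrite mem_primes pdiv_prime // pdiv_dvd ltnW.
move: md; rewrite (mobius_neq0E md0).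
by case: (primes d) => [|p [|q r]].
Qed.

Lemma size_primes_dvdn d m : (0 < m)%N -> (d %| m)%N ->
  (size (primes d) <= size (primes m))%N.
Proof.
move=> m0 dm; apply: uniq_leq_size; first exact: primes_uniq.
move=> p; rewrite !mem_primes m0 => /and3P[-> _ pd].
exact: dvdn_trans pd dm.
Qed.

Lemma qEulerGauss_unity_root a n (z : algC) : qEulerGauss a -> (0 < n)%N ->
  z ^+ n = 1 -> z != 1 ->
  \prod_(d <- divisors n | mobius d == 1) evalC (z ^+ d) (a (n %/ d)%N) =
  \prod_(d <- divisors n | mobius d == -1) evalC (z ^+ d) (a (n %/ d)%N).
Proof.
move=> aEG n0 zn z1; have [r /(congr1 (evalC z))] := aEG n n0.
rewrite rmorphM /= evalC_qint // mulr0 => /eqP.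
rewrite rmorphB subr_eq0 !rmorph_prod /=.
under eq_bigr do rewrite evalC_subs_pow.
by under [X in _ == X]eq_bigr do rewrite evalC_subs_pow; move/eqP.
Qed.

Section RootValues.

Variable a : nat -> {poly int}.

Definition root_value_at (n : nat) : Prop :=
  forall e (z : algC), (e %| n)%N -> (1 < e)%N -> e.-primitive_root z ->
    evalC z (a n) = (a (n %/ e)%N).[1]%:~R.

Lemma evalC_prim_root_pow n d e (z : algC) :
  (0 < n)%N -> (d %| n)%N -> (e %| n)%N -> e.-primitive_root z ->
  root_value_at (n %/ d) ->
  evalC (z ^+ d) (a (n %/ d)%N) = (a (n %/ lcmn d e)%N).[1]%:~R.
Proof.
move=> n0 dn en pz root_nd; have d0 := dvdn_gt0 n0 dn.
have [ed|ned] := boolP (e %| d)%N.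
  have -> : z ^+ d = 1 by apply/eqP; rewrite -(prim_order_dvd pz).
  by rewrite (lcmn_idPl ed) evalC1.
have g0 : (0 < gcdn d e)%N by rewrite gcdn_gt0 d0.
have lcm_de : lcmn d e = (d * (e %/ gcdn d e))%N by rewrite /lcmn muln_divA ?dvdn_gcdr.
have lcm_n : (lcmn d e %| n)%N by rewrite dvdn_lcm dn en.
rewrite lcm_de divnMA (root_nd (e %/ gcdn d e)%N) //.
- by rewrite dvdn_divRL // mulnC -lcm_de.
- rewrite ltn_neqAle divn_gt0 // (dvdn_leq (prim_order_gt0 pz) (dvdn_gcdr d e)) andbT.
  apply: contra ned => /eqP e_gcd.
  by rewrite -(divnK (dvdn_gcdr d e)) -e_gcd mul1n dvdn_gcdl.
- exact: exp_prim_root.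
Qed.

Variable N : nat.
Hypothesis aEG : qEulerGauss a.
Hypothesis N_gt0 : (0 < N)%N.
Hypothesis a1_neq0 : forall d : nat, d \in divisors N ->
  ~~ is_prime_power (N %/ d)%N -> (a d).[1] != 0.

Lemma a1_lcmn_neq0 n e d : (n %| N)%N -> (e %| n)%N -> (d %| n)%N ->
  mobius d = 1 -> d != 1%N -> (a (n %/ lcmn d e)%N).[1] != 0.
Proof.
move=> nN en dn md d1; set m := (n %/ lcmn d e)%N.
have n0 := dvdn_gt0 N_gt0 nN.
have mlcm : (m * lcmn d e = n)%N by rewrite divnK // dvdn_lcm dn en.
have mN : (m %| N)%N by apply: dvdn_trans nN; rewrite -mlcm dvdn_mulr.
have m0 := dvdn_gt0 N_gt0 mN.
have dNm : (d %| N %/ m)%N.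
  rewrite dvdn_divRL // mulnC; apply: dvdn_trans nN.
  by rewrite -mlcm dvdn_pmul2l ?dvdn_lcml.
apply: a1_neq0; first by rewrite -dvdn_divisors.
rewrite /is_prime_power negb_and -!ltnNge; apply/orP; right.
apply: leq_trans (mobius_eq1_primes md d1) (size_primes_dvdn _ dNm).
by rewrite divn_gt0 // dvdn_leq.
Qed.

Lemma root_value_at_dvd n : (n %| N)%N -> root_value_at n.
Proof.
elim/ltn_ind: n => n IH nN e z en e1 pz.
have n0 := dvdn_gt0 N_gt0 nN.
have zn : z ^+ n = 1 by apply/eqP; rewrite -(prim_order_dvd pz).
have z1 : z != 1.
  by apply: contraTneq e1 => z1; rewrite -leqNgt dvdn_leq // (prim_order_dvd pz) z1.
pose C l : algC := (a (n %/ l)%N).[1]%:~R.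
have evalC_pow_prod (P : pred nat) : (forall d, P d -> d != 1%N) ->
    \prod_(d <- divisors n | P d) evalC (z ^+ d) (a (n %/ d)%N) =
    \prod_(d <- divisors n | P d) C (lcmn d e).
  move=> P_neq1; rewrite big_seq_cond [RHS]big_seq_cond.
  apply: eq_bigr => d /andP[+ /P_neq1 d1]; rewrite -dvdn_divisors // => dn.
  have d_gt1 : (1 < d)%N by rewrite ltn_neqAle eq_sym d1 (dvdn_gt0 n0 dn).
  apply: evalC_prim_root_pow => //; apply: IH; first exact: ltn_Pdiv.
  exact: dvdn_trans (dvdn_div dn) nN.
have C_neq0 : \prod_(d <- divisors n | (d != 1%N) && (mobius d == 1)) C (lcmn d e) != 0.
  rewrite prodf_seq_neq0; apply/allP => d dn; apply/implyP => /andP[d1 /eqP md].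
  by rewrite intr_eq0 a1_lcmn_neq0 // dvdn_divisors.
have := qEulerGauss_unity_root aEG n0 zn z1.
rewrite bigD1_mobius1 // expr1 divn1.
rewrite !evalC_pow_prod => [|d /andP[] //|d /eqP md]; last first.
  by apply: contra_eq_neq md => ->; rewrite mobius1.
by rewrite -(big_mobius_lcmn _ _ n0 e1 en) bigD1_mobius1 // lcm1n => /(mulIf C_neq0).
Qed.

End RootValues.

Theorem theorem11 (a : nat -> {poly int}) (N : nat) :
  qEulerGauss a -> (0 < N)%N ->
  (forall d : nat, d \in divisors N -> ~~ is_prime_power (N %/ d)%N ->
     (a d).[1] != 0) ->
  zdvdp (qint N)
    (\sum_(d <- divisors N) (mobius d)%:~R *: subs_pow (a (N %/ d)%N) d).
Proof.
move=> aEG N_gt0 a1_neq0; apply: (qint_dvd_of_roots N_gt0) => z zN z1.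
have [e pz eN] := prim_order_exists N_gt0 zN.
have e1 : (1 < e)%N.
  rewrite ltn_neqAle (prim_order_gt0 pz) andbT; apply: contra z1 => /eqP e1.
  by rewrite -(prim_expr_order pz) -e1.
pose C l : algC := (a (N %/ l)%N).[1]%:~R.
rewrite rmorph_sum (eq_big_seq (fun d => C (lcmn d e) *~ mobius d)) => [|d]; last first.
  rewrite -dvdn_divisors // => dN.
  rewrite -mul_polyC rmorphM /= horner_morphC intz mulrzl evalC_subs_pow.
  rewrite (evalC_prim_root_pow N_gt0 dN eN pz) //.
  exact: (root_value_at_dvd aEG N_gt0 a1_neq0 (dvdn_div dN)).
by rewrite sumr_mobius big_mobius_lcmn ?subrr.
Qed.
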